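(* Let $\mathrm{int}(\Delta^n):=\{\mathbf{p}\in\Delta^n:p_i>0\ \forall i\}$. Each of the following proper scoring rules on the forecast domain $\mathcal{D}=\mathrm{int}(\Delta^n)$ has convex exposure: (i) the logarithmic scoring rule $s(\mathbf{p};j)=\ln p_j$ (with $G(\mathbf{p})=\sum_j p_j\ln p_j$); (ii) the scoring rule with $G(\mathbf{p})=-\sum_j p_j^{\gamma}$ for $\gamma\in(0,1)$, and the scoring rule with $G(\mathbf{p})=\sum_j p_j^{\gamma}$ for $\gamma<0$; (iii) the scoring rule with $G(\mathbf{p})=-\sum_j\ln p_j$; (iv) the scoring rule with $G(\mathbf{p})=-\prod_j p_j^{1/n}$.
   Context: A scoring rule ''given by'' a differentiable strictly convex $G$ on $\mathcal{D}$ is $s(\mathbf{p};j)=G(\mathbf{p})+\langle\nabla G(\mathbf{p}),\delta_j-\mathbf{p}\rangle$, where $\delta_j$ is the $j$-th standard basis vector; this is a proper scoring rule with expected reward function $G$. The exposure function is $\mathbf{g}=\nabla G$, with values understood modulo translation by the all-ones vector (equivalently, projected onto $\{\mathbf{x}:\sum_i x_i=0\}$). A scoring rule has convex exposure if the range of $\mathbf{g}$ is a convex set. *)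

From HB Require Import structures.
From mathcomp Require Import all_boot all_order all_algebra.
From mathcomp Require Import all_classical all_reals all_analysis.
Set Implicit Arguments. Unset Strict Implicit. Unset Printing Implicit Defensive.
Import Order.TTheory GRing.Theory Num.Theory.
Import numFieldNormedType.Exports.
Local Open Scope classical_set_scope.
Local Open Scope ring_scope.

Definition int_simplex (R : realType) (n : nat) : set 'rV[R]_n :=
  [set p | (forall i, 0 < p ord0 i) /\ \sum_(i < n) p ord0 i = 1].

Definition grad (R : realType) (n : nat) (G : 'rV[R]_n -> R) (p : 'rV[R]_n)
  : 'rV[R]_n :=
  \row_(j < n) 'D_(delta_mx 0 j) G p.

Definition proj_sum0 (R : realType) (n : nat) (x : 'rV[R]_n) : 'rV[R]_n :=
  x - ((\sum_(i < n) x ord0 i) / n%:R) *: const_mx 1.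

(* exposure function g = grad G, taken modulo translation by all-ones *)
Definition exposure (R : realType) (n : nat) (G : 'rV[R]_n -> R) (p : 'rV[R]_n)
  : 'rV[R]_n := proj_sum0 (grad G p).

Definition convex_set_rV (R : realType) (n : nat) (S : set 'rV[R]_n) : Prop :=
  forall x y, S x -> S y -> forall t : R, 0 <= t <= 1 ->
    S (t *: x + (1 - t) *: y).

Definition has_convex_exposure (R : realType) (n : nat)
  (D : set 'rV[R]_n) (G : 'rV[R]_n -> R) : Prop :=
  convex_set_rV (exposure G @` D).

Definition G_log (R : realType) (n : nat) (p : 'rV[R]_n) : R :=
  \sum_(j < n) p ord0 j * ln (p ord0 j).
Definition G_negpow (R : realType) (n : nat) (gamma : R) (p : 'rV[R]_n) : R :=
  - \sum_(j < n) powR (p ord0 j) gamma.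
Definition G_pow (R : realType) (n : nat) (gamma : R) (p : 'rV[R]_n) : R :=
  \sum_(j < n) powR (p ord0 j) gamma.
Definition G_neglnsum (R : realType) (n : nat) (p : 'rV[R]_n) : R :=
  - \sum_(j < n) ln (p ord0 j).
Definition G_neggeo (R : realType) (n : nat) (p : 'rV[R]_n) : R :=
  - \prod_(j < n) powR (p ord0 j) (n%:R^-1).

From HB Require Import structures.
From mathcomp Require Import all_boot all_order all_algebra.
From mathcomp Require Import all_classical all_reals all_analysis.
From mathcomp Require Import ring.
Set Implicit Arguments.
Unset Strict Implicit.
Unset Printing Implicit Defensive.
Import Order.TTheory GRing.Theory Num.Theory.
Import numFieldNormedType.Exports.
Local Open Scope classical_set_scope.
Local Open Scope ring_scope.

(* Each of these rules has convex exposure because its exposure range is the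
   whole hyperplane {x | sum_i x_i = 0}: for every y there are p in the open
   simplex and c with grad G p = y + c 1.  For the logarithmic rule p is the
   softmax of y.  For the three power-type rules the partial derivatives have
   the form -k p_j^(-a) with k, a > 0, so p_j = (t + (max y - y_j) / k)^(-1/a),
   with t > 0 chosen by the intermediate value theorem to make sum_j p_j = 1.
   For the geometric mean, whose gradient is -GM(p) / (n p_j), p is
   proportional to 1 / (s + max y - y_j), with s chosen by the intermediate
   value theorem so that the product of the s + max y - y_j equals n^(-n). *)

Section exposure_range.
Variables (R : realType) (n : nat).
Implicit Types (z : 'rV[R]_n) (D : set 'rV[R]_n) (G : 'rV[R]_n -> R).

Lemma sum_shift_ones z c :
  \sum_(i < n) (z + c *: const_mx 1) ord0 i = \sum_(i < n) z ord0 i + c *+ n.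
Proof.
under eq_bigr do rewrite !mxE mulr1.
by rewrite big_split /= sumr_const card_ord.
Qed.

Hypothesis n_gt0 : (0 < n)%N.

Let n_neq0 : n%:R != 0 :> R. Proof. by rewrite pnatr_eq0 -lt0n. Qed.

Lemma sum_proj_sum0 z : \sum_(i < n) proj_sum0 z ord0 i = 0.
Proof.
rewrite /proj_sum0 -scaleNr sum_shift_ones mulNrn -[_ *+ n]mulr_natr.
by rewrite mulfVK // subrr.
Qed.

Lemma proj_sum0_shift_ones z c :
  \sum_(i < n) z ord0 i = 0 -> proj_sum0 (z + c *: const_mx 1) = z.
Proof.
move=> z0; rewrite /proj_sum0 sum_shift_ones z0 add0r.
by rewrite -mulr_natr mulfK // addrK.
Qed.

Definition grad_onto_mod_ones D G :=
  forall y : 'rV[R]_n, exists2 p, D p & exists c : R, grad G p = y + c *: const_mx 1.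

Lemma exposure_image_hyperplane D G : grad_onto_mod_ones D G ->
  exposure G @` D = [set y | \sum_(i < n) y ord0 i = 0].
Proof.
move=> onto; apply/seteqP; split => [_ [p _ <-]|y y0]; first exact: sum_proj_sum0.
have [p Dp [c gradp]] := onto y.
by exists p => //; rewrite /exposure gradp proj_sum0_shift_ones.
Qed.

End exposure_range.

Lemma convex_hyperplane (R : realType) (n : nat) :
  convex_set_rV [set y : 'rV[R]_n | \sum_(i < n) y ord0 i = 0].
Proof.
move=> x y /= x0 y0 t _.
under eq_bigr do rewrite !mxE.
by rewrite big_split /= -!mulr_sumr x0 y0 !mulr0 addr0.
Qed.

Lemma int_simplex_dim_gt0 (R : realType) (n : nat) (p : 'rV[R]_n) :
  int_simplex p -> (0 < n)%N.
Proof.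
case: n p => [p [_]|//]; by rewrite big_ord0 => /eqP; rewrite eq_sym oner_eq0.
Qed.

Lemma has_convex_exposure_simplex (R : realType) (n : nat) (G : 'rV[R]_n -> R) :
  ((0 < n)%N -> grad_onto_mod_ones (@int_simplex R n) G) ->
  has_convex_exposure (@int_simplex R n) G.
Proof.
move=> onto; have [n_gt0|n_le0] := boolP (0 < n)%N; last first.
  by move=> x y [p /int_simplex_dim_gt0 n_gt0]; rewrite n_gt0 in n_le0.
rewrite /has_convex_exposure (exposure_image_hyperplane n_gt0 (onto n_gt0)).
exact: convex_hyperplane.
Qed.

Section partial_derivatives.
Variables (R : realType) (n : nat).
Implicit Types (p : 'rV[R]_n) (j : 'I_n).

Lemma big_delta_shift (idx : R) (op : Monoid.com_law idx) (F : R -> R) p j h :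
  \big[op/idx]_(i < n) F ((h *: delta_mx 0 j + p) ord0 i) =
  op (F (h + p ord0 j)) (\big[op/idx]_(i < n | i != j) F (p ord0 i)).
Proof.
rewrite (bigD1 j) //= !mxE eqxx mulr1; congr (op _ _).
by apply: eq_bigr => i ij; rewrite !mxE eq_sym (negbTE ij) mulr0 add0r.
Qed.

Lemma is_derive_delta (f : 'rV[R]_n -> R) (g : R -> R) p j d :
  (forall h, f (h *: delta_mx 0 j + p) = g (h + p ord0 j)) ->
  is_derive (p ord0 j) 1 g d -> is_derive p (delta_mx 0 j) f d.
Proof.
move=> fg [dg <-].
have f_g : (fun h : R => h^-1 *: ((f \o shift p) (h *: delta_mx 0 j) - f p)) =
    (fun h : R => h^-1 *: ((g \o shift (p ord0 j)) (h *: 1) - g (p ord0 j))).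
  apply/funext => h /=.
  rewrite fg -[in f p](add0r p) -(scale0r (delta_mx 0 j)) fg.
  by rewrite add0r /GRing.scale /= mulr1.
by split; rewrite /derivable /derive f_g.
Qed.

Lemma is_derive_sum_delta (phi : R -> R) p j d :
  is_derive (p ord0 j) 1 phi d ->
  is_derive p (delta_mx 0 j) (fun q => \sum_(i < n) phi (q ord0 i)) d.
Proof.
move=> dphi; pose C := \sum_(i < n | i != j) phi (p ord0 i).
apply: (@is_derive_delta _ (phi + cst C)) => [h|].
  by rewrite big_delta_shift.
by apply: is_derive_eq; rewrite addr0.
Qed.

Lemma is_derive_prod_delta (phi : R -> R) p j d :
  is_derive (p ord0 j) 1 phi d ->
  is_derive p (delta_mx 0 j) (fun q => \prod_(i < n) phi (q ord0 i))
    (d * \prod_(i < n | i != j) phi (p ord0 i)).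
Proof.
move=> dphi; pose C := \prod_(i < n | i != j) phi (p ord0 i).
apply: (@is_derive_delta _ (phi * cst C)) => [h|].
  by rewrite big_delta_shift.
by apply: is_derive_eq; rewrite /= scaler0 add0r /GRing.scale /= mulrC.
Qed.

Lemma grad_is_derive (G : 'rV[R]_n -> R) p (g : 'I_n -> R) :
  (forall j, is_derive p (delta_mx 0 j) G (g j)) -> grad G p = \row_j g j.
Proof. by move=> dG; apply/rowP => j; rewrite !mxE derive_val. Qed.

End partial_derivatives.

Lemma is_derive1_xlnx (R : realType) (x : R) :
  0 < x -> is_derive x 1 (fun t => t * ln t) (ln x + 1).
Proof.
move=> x_gt0; apply: is_derive_eq.
  exact: is_deriveM (is_derive_id x 1) (is_derive1_ln x_gt0).
by rewrite /GRing.scale /= mulfV ?gt_eqF // mulr1 addrC.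
Qed.

Section gradients.
Variables (R : realType) (n : nat).
Implicit Types gamma : R.
Variable p : 'rV[R]_n.
Hypothesis p_gt0 : forall i, 0 < p ord0 i.

Lemma grad_G_log : grad (@G_log R n) p = \row_j (ln (p ord0 j) + 1).
Proof.
apply: grad_is_derive => j.
exact: is_derive_sum_delta (is_derive1_xlnx (p_gt0 j)).
Qed.

Lemma grad_G_pow gamma :
  grad (@G_pow R n gamma) p = \row_j (gamma * powR (p ord0 j) (gamma - 1)).
Proof.
apply: grad_is_derive => j.
exact: is_derive_sum_delta (is_derive1_powR gamma (p_gt0 j)).
Qed.

Lemma grad_G_negpow gamma :
  grad (@G_negpow R n gamma) p = \row_j - (gamma * powR (p ord0 j) (gamma - 1)).
Proof.
apply: grad_is_derive => j.
exact: is_deriveN (is_derive_sum_delta (is_derive1_powR gamma (p_gt0 j))).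
Qed.

Lemma grad_G_neglnsum : grad (@G_neglnsum R n) p = \row_j - (p ord0 j)^-1.
Proof.
apply: grad_is_derive => j.
exact: is_deriveN (is_derive_sum_delta (is_derive1_ln (p_gt0 j))).
Qed.

Lemma grad_G_neggeo : grad (@G_neggeo R n) p =
  \row_j - (\prod_(i < n) powR (p ord0 i) n%:R^-1 / (n%:R * p ord0 j)).
Proof.
apply: grad_is_derive => j; apply: is_derive_eq.
  exact: is_deriveN (is_derive_prod_delta (is_derive1_powR _ (p_gt0 j))).
have pj_neq0 : p ord0 j != 0 by rewrite gt_eqF.
rewrite [in RHS](bigD1 j) //= powRB ?pj_neq0 ?implybT // powRr1 ?ltW //.
by rewrite invfM; ring.
Qed.

End gradients.

Lemma continuous_powR (R : realType) (a x : R) :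
  0 < x -> {for x, continuous (@powR R ^~ a)}.
Proof.
move=> x_gt0; have [dpowR _] := is_derive1_powR a x_gt0.
exact/differentiable_continuous/derivable1_diffP.
Qed.

Lemma prod_powR (R : realType) (I : Type) (r : seq I) (P : pred I) (f : I -> R) a :
  (forall i, P i -> 0 <= f i) ->
  \prod_(i <- r | P i) powR (f i) a = powR (\prod_(i <- r | P i) f i) a.
Proof.
move=> f_ge0.
suff [] : \prod_(i <- r | P i) powR (f i) a = powR (\prod_(i <- r | P i) f i) a /\
          0 <= \prod_(i <- r | P i) f i by [].
elim/big_rec2: _ => [|i x y Pi [-> y_ge0]]; first by rewrite powR1.
by rewrite powRM ?f_ge0 // mulr_ge0 ?f_ge0.
Qed.

Section normalizing_shift.
Variables (R : realType) (n : nat) (e : 'I_n -> R) (j0 : 'I_n).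
Hypotheses (e_ge0 : forall i, 0 <= e i) (e_j0 : e j0 = 0).

Let n_ge1 : 1 <= n%:R :> R.
Proof. by rewrite ler1n (leq_ltn_trans _ (ltn_ord j0)). Qed.

Let n_gt0 : 0 < n%:R :> R := lt_le_trans ltr01 n_ge1.

Lemma exists_shift_sum_powR_eq1 (b : R) : 0 < b ->
  exists2 t, 0 < t & \sum_(i < n) powR (t + e i) (- b) = 1.
Proof.
move=> b_gt0; pose h t := \sum_(i < n) powR (t + e i) (- b).
(* At T every term is at most T^(-b) = 1/n. *)
pose T := powR n%:R b^-1.
have T_ge1 : 1 <= T.
  have one_pow : powR 1 b^-1 = 1 :> R by rewrite powR1.
  rewrite /T -[leLHS]one_pow.
  by apply: ge0_ler_powR; rewrite ?nnegrE ?ler01 ?ler0n ?n_ge1 ?invr_ge0 ?ltW.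
have T_gt0 : 0 < T := lt_le_trans ltr01 T_ge1.
have h1 : 1 <= h 1.
  rewrite /h (bigD1 j0) //= e_j0 addr0 powR1 lerDl.
  by rewrite sumr_ge0 // => i _; rewrite powR_ge0.
have hT : h T <= 1.
  have -> : 1 = \sum_(i < n) n%:R^-1 :> R.
    rewrite sumr_const card_ord -[_ *+ n]mulr_natr mulVf //.
    by rewrite gt_eqF // n_gt0.
  apply: ler_sum => i _.
  have Tb : powR T b = n%:R by rewrite -powRrM mulVf ?gt_eqF // powRr1 ?ler0n.
  have Te_gt0 : 0 < T + e i by rewrite ltr_wpDr ?e_ge0 // T_gt0.
  rewrite powRN -Tb lef_pV2 ?posrE ?powR_gt0 ?T_gt0 ?n_gt0 //.
  by apply: ge0_ler_powR; rewrite ?nnegrE ?lerDl ?e_ge0 ?ltW ?T_gt0.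
have h_cont : {within `[1, T], continuous h}.
  apply: continuous_in_subspaceT => t; rewrite inE /= in_itv /= => /andP [t_ge1 _].
  apply: cvg_big => [|i _]; first exact: add_continuous.
  apply: (@continuous_comp _ _ _ (fun s => s + e i) (@powR R ^~ (- b))).
    by apply: continuousD => //; exact: cst_continuous.
  by apply: continuous_powR; rewrite ltr_wpDr ?e_ge0 // (lt_le_trans ltr01 t_ge1).
have [t t_in ht] : exists2 t, t \in `[1, T] & h t = 1.
  by apply: IVT => //; rewrite ge_min le_max h1 hT orbT.
by exists t => //; move: t_in; rewrite in_itv /= => /andP [/(lt_le_trans ltr01)].
Qed.


Lemma exists_shift_prod_eq (m : R) : 0 < m ->
  exists2 s, 0 < s & \prod_(i < n) (s + e i) = m ^+ n.
Proof.
move=> m_gt0; pose phi s := \prod_(i < n) (s + e i).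
have phi0 : phi 0 = 0 by rewrite /phi (bigD1 j0) //= e_j0 addr0 mul0r.
have phim : m ^+ n <= phi m.
  rewrite /phi -[n in m ^+ n]card_ord -prodr_const; apply: ler_prod => i _.
  by rewrite ltW // lerDl e_ge0.
have phi_cont : {within `[0, m], continuous phi}.
  apply: continuous_subspaceT; apply: continuous_big => [|i _].
    exact: mul_continuous.
  by move=> x; apply: continuousD => //; exact: cst_continuous.
have [s s_in phis] : exists2 s, s \in `[0, m] & phi s = m ^+ n.
  apply: IVT (ltW m_gt0) phi_cont _.
  by rewrite ge_min le_max phi0 phim exprn_ge0 ?(ltW m_gt0) ?orbT.
exists s => //; rewrite lt_def; move: s_in; rewrite in_itv /= => /andP [-> _].
rewrite andbT; apply/eqP => s0; move: phis; rewrite s0 phi0 => /eqP.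
by rewrite eq_sym gt_eqF ?exprn_gt0.
Qed.

End normalizing_shift.

Section gradient_surjectivity.
Variables (R : realType) (n : nat).
Hypothesis n_gt0 : (0 < n)%N.

Lemma sumr_gt0 (w : 'I_n -> R) : (forall i, 0 < w i) -> 0 < \sum_(i < n) w i.
Proof.
move=> w_gt0; rewrite (bigD1 (Ordinal n_gt0)) //= ltr_pwDl //.
by rewrite sumr_ge0 // => i _; rewrite ltW.
Qed.

Lemma int_simplex_normalize (w : 'I_n -> R) : (forall i, 0 < w i) ->
  int_simplex (\row_j (w j / \sum_(i < n) w i)).
Proof.
move=> w_gt0; have S_gt0 := sumr_gt0 w_gt0.
split=> [i|]; first by rewrite mxE divr_gt0.
by under eq_bigr do rewrite mxE; rewrite -mulr_suml divff // gt_eqF.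
Qed.

Lemma exists_row_argmax (y : 'rV[R]_n) : exists j0, forall i, y ord0 i <= y ord0 j0.
Proof.
have := @arg_maxP _ _ _ (Ordinal n_gt0) xpredT (fun i => y ord0 i) isT.
by case=> j _ y_le; exists j => i; exact: y_le.
Qed.

Lemma exists_simplex_neg_powR (k a : R) : 0 < k -> 0 < a ->
  forall y : 'rV[R]_n, exists2 p, int_simplex p &
    exists c, forall j, - k * powR (p ord0 j) (- a) = y ord0 j + c.
Proof.
move=> k_gt0 a_gt0 y.
have [j0 y_le] := exists_row_argmax y.
pose e i := (y ord0 j0 - y ord0 i) / k.
have e_ge0 i : 0 <= e i by rewrite divr_ge0 ?subr_ge0 ?y_le ?ltW.
have e_j0 : e j0 = 0 by rewrite /e subrr mul0r.
have a_inv_gt0 : 0 < a^-1 by rewrite invr_gt0.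
have [t t_gt0 sum_eq1] := exists_shift_sum_powR_eq1 e_ge0 e_j0 a_inv_gt0.
have te_gt0 i : 0 < t + e i by rewrite ltr_pwDl.
exists (\row_j powR (t + e j) (- a^-1)).
  split=> [i|]; first by rewrite mxE powR_gt0.
  by rewrite -sum_eq1; apply: eq_bigr => i _; rewrite mxE.
exists (- (k * t + y ord0 j0)) => j.
rewrite mxE -powRrM mulrNN mulVf ?gt_eqF // powRr1 ?ltW // /e.
by field; rewrite gt_eqF.
Qed.

Lemma grad_onto_G_log : grad_onto_mod_ones (@int_simplex R n) (@G_log R n).
Proof.
move=> y; pose Z := \sum_(i < n) expR (y ord0 i).
have Z_gt0 : 0 < Z := sumr_gt0 (fun i => expR_gt0 (y ord0 i)).
have p_simplex := int_simplex_normalize (fun i => expR_gt0 (y ord0 i)).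
exists (\row_j (expR (y ord0 j) / Z)) => //; exists (1 - ln Z).
have [p_gt0 _] := p_simplex; rewrite (grad_G_log p_gt0).
apply/rowP => j; rewrite !mxE lnM ?posrE ?expR_gt0 ?invr_gt0 // lnV ?posrE // expRK.
by rewrite mulr1; ring.
Qed.

Lemma grad_onto_G_negpow gamma : 0 < gamma < 1 ->
  grad_onto_mod_ones (@int_simplex R n) (@G_negpow R n gamma).
Proof.
move=> /andP [gamma_gt0 gamma_lt1] y.
have a_gt0 : 0 < 1 - gamma by rewrite subr_gt0.
have [p p_simplex [c pc]] := exists_simplex_neg_powR gamma_gt0 a_gt0 y.
have [p_gt0 _] := p_simplex.
exists p => //; exists c; rewrite (grad_G_negpow p_gt0).
by apply/rowP => j; rewrite !mxE mulr1 -pc opprB mulNr.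
Qed.

Lemma grad_onto_G_pow gamma : gamma < 0 ->
  grad_onto_mod_ones (@int_simplex R n) (@G_pow R n gamma).
Proof.
move=> gamma_lt0 y.
have k_gt0 : 0 < - gamma by rewrite oppr_gt0.
have a_gt0 : 0 < 1 - gamma by rewrite subr_gt0 (lt_trans gamma_lt0).
have [p p_simplex [c pc]] := exists_simplex_neg_powR k_gt0 a_gt0 y.
have [p_gt0 _] := p_simplex.
exists p => //; exists c; rewrite (grad_G_pow p_gt0).
by apply/rowP => j; rewrite !mxE mulr1 -pc opprB opprK.
Qed.

Lemma grad_onto_G_neglnsum : grad_onto_mod_ones (@int_simplex R n) (@G_neglnsum R n).
Proof.
move=> y; have [p p_simplex [c pc]] := exists_simplex_neg_powR ltr01 ltr01 y.
have [p_gt0 _] := p_simplex.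
exists p => //; exists c; rewrite (grad_G_neglnsum p_gt0).
by apply/rowP => j; rewrite !mxE mulr1 -pc powR_inv1 ?mulN1r ?ltW.
Qed.

Lemma grad_onto_G_neggeo : grad_onto_mod_ones (@int_simplex R n) (@G_neggeo R n).
Proof.
move=> y; have [j0 y_le] := exists_row_argmax y.
pose e i := y ord0 j0 - y ord0 i.
have e_ge0 i : 0 <= e i by rewrite subr_ge0.
have e_j0 : e j0 = 0 by rewrite /e subrr.
have n_inv_gt0 : 0 < n%:R^-1 :> R by rewrite invr_gt0 ltr0n.
have [s s_gt0 prod_w] := exists_shift_prod_eq e_ge0 e_j0 n_inv_gt0.
pose w i := s + e i.
have w_gt0 i : 0 < w i by rewrite ltr_pwDl.
have w_inv_gt0 i : 0 < (w i)^-1 by rewrite invr_gt0.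
pose S := \sum_(i < n) (w i)^-1.
have S_gt0 : 0 < S := sumr_gt0 w_inv_gt0.
pose p := \row_j ((w j)^-1 / S).
have p_simplex : int_simplex p := int_simplex_normalize w_inv_gt0.
have [p_gt0 _] := p_simplex.
have pE i : p ord0 i = (w i)^-1 / S by rewrite mxE.
exists p => //; exists (- (s + y ord0 j0)).
rewrite (grad_G_neggeo p_gt0).
have geomean : \prod_(i < n) powR (p ord0 i) n%:R^-1 = n%:R / S.
  rewrite prod_powR => [|i _]; last exact/ltW/p_gt0.
  under eq_bigr do rewrite pE.
  have nS_ge0 : 0 <= n%:R / S by rewrite divr_ge0 ?ler0n ?ltW.
  rewrite big_split /= prodfV prod_w prodr_const card_ord !exprVn invrK -expr_div_n.
  by rewrite -powR_mulrn // -powRrM mulfV ?pnatr_eq0 -?lt0n // powRr1.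
apply/rowP => j; rewrite !mxE geomean.
have -> : y ord0 j + - (s + y ord0 j0) * 1 = - w j by rewrite /w /e; ring.
have n_neq0 : n%:R != 0 :> R by rewrite pnatr_eq0 -lt0n.
by field; rewrite n_neq0 !gt_eqF.
Qed.

End gradient_surjectivity.

Theorem corollaryF2 (R : realType) (n : nat) :
  has_convex_exposure (@int_simplex R n) (@G_log R n) /\
  (forall gamma : R, 0 < gamma < 1 ->
     has_convex_exposure (@int_simplex R n) (@G_negpow R n gamma)) /\
  (forall gamma : R, gamma < 0 ->
     has_convex_exposure (@int_simplex R n) (@G_pow R n gamma)) /\
  has_convex_exposure (@int_simplex R n) (@G_neglnsum R n) /\
  has_convex_exposure (@int_simplex R n) (@G_neggeo R n).
Proof.
split; first exact/has_convex_exposure_simplex/grad_onto_G_log.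
split=> [gamma gamma_in|].
  by apply: has_convex_exposure_simplex => n_gt0; exact: grad_onto_G_negpow.
split=> [gamma gamma_lt0|].
  by apply: has_convex_exposure_simplex => n_gt0; exact: grad_onto_G_pow.
split; first exact/has_convex_exposure_simplex/grad_onto_G_neglnsum.
exact/has_convex_exposure_simplex/grad_onto_G_neggeo.
Qed.
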